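(* Consider a single MapReduce step (as defined in the context) executed in the BSP model with $p$ PEs by the following two-superstep algorithm: in the first superstep each PE applies $\mu$ to its local input elements and sends each resulting pair $(k,v)\in B$ to PE $h(k)\in\{1,\dots,p\}$ for a hash function $h$; in the second superstep each PE assembles the received pairs into elements of $C$ (using a local hash table), applies $\rho$ to them, and whenever a call of $\rho$ produces more than one output element, sends all but one of these output elements to a uniformly random PE. Assume that the input multiset $A$ is randomly distributed over the PEs and that $h$ behaves like a truly random mapping. Then this implementation takes expected time $$O\!\left(\hat{w}\,\hat{o}\!\left(\frac{w}{\hat{w}},p\right)+L+g\,\hat{m}\,\hat{o}\!\left(\frac{m}{\hat{m}},p\right)\right).$$ In particular, the expected time is $$O\!\left(\frac{w}{p}+L+g\frac{m}{p}\right)\quad\text{if } w=\Omega(\hat{w}\,p\log p)\text{ and } m=\Omega(\hat{m}\,p\log p).$$ Moreover, the output multiset $D$ is randomly distributed over the PEs.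
   Context: A MapReduce step takes a multiset $A$ and a mapping function $\mu$ mapping each $a\in A$ to a multiset of key–value pairs; $B=\bigcup_{a\in A}\mu(a)\subseteq K\times V$; $C=\{(k,X): X=\{x:(k,x)\in B\}\neq\emptyset\}$; a reduction function $\rho$ applied to the elements of $C$ yields the output multiset $D$. Sizes are measured in machine words. $w$: total time to evaluate $\mu$ and $\rho$ on all inputs; $\hat{w}$: maximum time of a single call of $\mu$ or $\rho$; $m$: total number of machine words in $A,B,C,D$; $\hat{m}$: maximum number of machine words produced or consumed by a single call of $\mu$ or $\rho$. BSP model: computation proceeds in globally synchronized supersteps, each consisting of local computation followed by a message exchange; a superstep costs $w_x+L+hg$ where $w_x$ is the maximum local work of any PE, $h$ is the maximum number of machine words communicated by any PE, $L$ is the latency parameter and $g$ the gap parameter. $\hat{o}(b,p)$ denotes the expected maximum occupancy of a bin when $\lceil b\rceil$ balls are placed independently and uniformly at random into $p$ bins. *)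

From HB Require Import structures.
From mathcomp Require Import all_boot all_order all_algebra.
From mathcomp Require Import reals exp.
Set Implicit Arguments. Unset Strict Implicit. Unset Printing Implicit Defensive.
Import Order.TTheory GRing.Theory Num.Theory.

(* One MapReduce step.  The multiset A is given as a sequence (its order is  *)
(* irrelevant for everything below except for fixing an enumeration).        *)
Record mr_step := MRStep {
  tA : Type; tK : eqType; tV : Type; tD : Type;
  mu : tA -> seq (tK * tV);
  rho : tK -> seq tV -> seq tD;
  time_mu : tA -> nat;
  time_rho : tK -> seq tV -> nat;
  words_A : tA -> nat;
  words_B : tK -> tV -> nat;
  words_D : tD -> nat;
  input : seq tA
}.

Section MapReduce.
Variable S : mr_step.

Definition Bseq : seq (tK S * tV S) := flatten (map (@mu S) (input S)).
(* the distinct keys, i.e. the index set of C *)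
Definition keys : seq (tK S) := undup (map fst Bseq).
(* X such that (k, X) in C *)
Definition Xof (k : tK S) : seq (tV S) := [seq kv.2 | kv <- Bseq & kv.1 == k].
(* an element (k,X) of C is represented by its pairs (k,x), x in X *)
Definition words_C (k : tK S) : nat := \sum_(x <- Xof k) words_B k x.
Definition outs (k : tK S) : seq (tD S) := rho k (Xof k).
Definition Dseq : seq (tD S) := flatten (map outs keys).

Definition work_total : nat :=
  \sum_(a <- input S) time_mu a + \sum_(k <- keys) time_rho k (Xof k).
Definition work_max : nat :=
  maxn (\max_(a <- input S) time_mu a) (\max_(k <- keys) time_rho k (Xof k)).

Definition words_mu_call (a : tA S) : nat :=
  words_A a + \sum_(kv <- mu a) words_B kv.1 kv.2.
Definition words_rho_call (k : tK S) : nat :=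
  words_C k + \sum_(d <- outs k) words_D d.

Definition mem_total : nat :=
  \sum_(a <- input S) words_A a + \sum_(kv <- Bseq) words_B kv.1 kv.2
  + \sum_(k <- keys) words_C k + \sum_(d <- Dseq) words_D d.
Definition mem_max : nat :=
  maxn (\max_(a <- input S) words_mu_call a) (\max_(k <- keys) words_rho_call k).

(* Standing modelling assumption: a call of rho reads its whole input. *)
Definition rho_reads_input : Prop :=
  forall k, k \in keys -> words_C k <= time_rho k (Xof k).

(* global index of each element of D: (index of its key, rank among the
   outputs of that call of rho) *)
Definition Dpos : seq (nat * nat) :=
  flatten [seq [seq (tk.1, j) | j <- iota 0 (size (outs tk.2))]
          | tk <- zip (iota 0 (size keys)) keys].

Variable p : nat.

(* The random choices: placement of the input elements, the random hash
   function on keys, and random destinations of output elements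
   (the destination of the first output of each rho call is not used). *)
Definition Omega : finType :=
  ({ffun 'I_(size (input S)) -> 'I_p} * {ffun 'I_(size keys) -> 'I_p}
   * {ffun 'I_(size Dseq) -> 'I_p})%type.

Definition elA (j : 'I_(size (input S))) : tA S := tnth (in_tuple (input S)) j.
Definition elK (t : 'I_(size keys)) : tK S := tnth (in_tuple keys) t.
Definition elD (d : 'I_(size Dseq)) : tD S := tnth (in_tuple Dseq) d.

Definition fun_at n (f : {ffun 'I_n -> 'I_p}) (t : nat) : nat :=
  if insub t is Some i then val (f i) else 0.

Definition work1 (om : Omega) (i : 'I_p) : nat :=
  \sum_(j < size (input S) | om.1.1 j == i) time_mu (elA j).
Definition sent1 (om : Omega) (i : 'I_p) : nat :=
  \sum_(j < size (input S) | om.1.1 j == i)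
     \sum_(kv <- mu (elA j)) words_B kv.1 kv.2.
Definition recv1 (om : Omega) (i : 'I_p) : nat :=
  \sum_(t < size keys | om.1.2 t == i) words_C (elK t).

(* superstep 2: assembling C (hash table, linear in the received words)
   and applying rho; all but the first output of each call is sent *)
Definition work2 (om : Omega) (i : 'I_p) : nat :=
  \sum_(t < size keys | om.1.2 t == i)
     (words_C (elK t) + time_rho (elK t) (Xof (elK t))).
Definition sent2 (om : Omega) (i : 'I_p) : nat :=
  \sum_(t < size keys | om.1.2 t == i) \sum_(d <- behead (outs (elK t))) words_D d.
Definition recv2 (om : Omega) (i : 'I_p) : nat :=
  \sum_(d < size Dseq | ((nth (0, 0) Dpos d).2 != 0) && (om.2 d == i)) words_D (elD d).

Definition placeD (om : Omega) (d : 'I_(size Dseq)) : nat :=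
  let tj := nth (0, 0) Dpos d in
  if tj.2 == 0 then fun_at om.1.2 tj.1 else val (om.2 d).

Variable R : realType.
Variables (L g : R).

(* BSP cost: two supersteps, each w_x + L + h g *)
Definition bsp_time (om : Omega) : R :=
  ((\max_(i < p) work1 om i)%:R + L + g * (\max_(i < p) maxn (sent1 om i) (recv1 om i))%:R)
  + ((\max_(i < p) work2 om i)%:R + L + g * (\max_(i < p) maxn (sent2 om i) (recv2 om i))%:R).

Definition expected_time : R :=
  (\sum_(om : Omega) bsp_time om) / (#|{: Omega}|)%:R.

End MapReduce.

(* \hat o(b, p): expected maximum bin occupancy, ceil b balls into p bins *)
Definition ohat (R : realType) (b : R) (p : nat) : R :=
  let N := `|Num.ceil b|%N in
  (\sum_(f : {ffun 'I_N -> 'I_p}) (\max_(i < p) #|[pred j | f j == i]|)%:R)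
  / (p ^ N)%:R.

(* Every superstep cost is a maximum over the p PEs of loads of the form
   sum_{j placed on i} c_j, where the "balls" j (input elements, keys, output
   elements) are placed independently and uniformly at random and carry weights
   at most W (= \hat w or \hat m, up to a factor 2) with total at most T (= w or m).
   For such weighted balls the expected maximum load is at most W * \hat o(T/W, p):
   moving weight from one ball onto another that stays below W cannot decrease it,
   because the old weights are a convex combination of the new ones and of the new
   ones with the two balls swapped, and the maximum load is convex; moving weight
   forward until every ball but the last nonempty one is full leaves at most
   ceil(T/W) balls, each of weight at most W.  Independently, the exponential moment
   with parameter 1/(2W) and Jensen's inequality for ln bound the expected maximum
   load by 2 W ln p + 2 T / p, which is O(T/p) when T = Omega(W p log p).
   Finally, the first output of a call of rho stays on the PE h(k) of its key k,
   and distinct keys are hashed independently, while every other output goes to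
   an independent uniformly random PE; so each placement of D is equally likely. *)

From Pilot Require Import Defs.
From mathcomp Require Import all_boot all_order all_algebra perm.
From mathcomp Require Import reals exp sequences.
From mathcomp Require Import ring lra zify.
Import Order.TTheory GRing.Theory Num.Theory.
Set Implicit Arguments. Unset Strict Implicit. Unset Printing Implicit Defensive.

(** * Weighted balls into bins *)

Section WeightedBins.
Variable p : nat.

Section FixedBalls.
Variable n : nat.
Implicit Types (c d e : 'I_n -> nat) (f : {ffun 'I_n -> 'I_p}).

Definition bin_load c f (i : 'I_p) : nat := \sum_(j < n | f j == i) c j.
Definition max_load c f : nat := \max_(i < p) bin_load c f i.
Definition max_load_sum c : nat := \sum_f max_load c f.

Lemma max_load_sum_le c d :
  (forall j, c j <= d j) -> max_load_sum c <= max_load_sum d.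
Proof.
move=> le_cd; apply: leq_sum => f _; apply/bigmax_leqP => i _.
apply: leq_trans (leq_bigmax i); exact: leq_sum.
Qed.

Lemma max_load_sum_perm (s : {perm 'I_n}) c :
  max_load_sum (c \o s) = max_load_sum c.
Proof.
have inj_comp_s : injective (fun f : {ffun 'I_n -> 'I_p} => [ffun j => f (s j)]).
  move=> f1 f2 /ffunP eq_f; apply/ffunP => j.
  by have := eq_f ((s^-1)%g j); rewrite !ffunE permKV.
rewrite /max_load_sum (reindex_inj inj_comp_s); apply: eq_bigr => f _.
apply: eq_bigr => i _; rewrite /bin_load [RHS](reindex_inj (@perm_inj _ s)).
by apply: eq_bigl => j; rewrite ffunE.
Qed.

Lemma max_load_convex a b c d e f :
  (forall j, (a + b) * c j = a * d j + b * e j) ->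
  (a + b) * max_load c f <= a * max_load d f + b * max_load e f.
Proof.
move=> comb; rewrite /max_load (big_morph _ (maxnMr (a + b)) (muln0 _)).
apply/bigmax_leqP => i _.
have -> : (a + b) * bin_load c f i = a * bin_load d f i + b * bin_load e f i.
  by rewrite /bin_load !big_distrr -big_split; apply: eq_bigr => j _.
by apply: leq_add; rewrite leq_mul2l leq_bigmax orbT.
Qed.

Lemma max_load_sum_convex a b c d e :
  (forall j, (a + b) * c j = a * d j + b * e j) ->
  (a + b) * max_load_sum c <= a * max_load_sum d + b * max_load_sum e.
Proof.
move=> comb; rewrite /max_load_sum !big_distrr -big_split /=.
by apply: leq_sum => f _; apply: max_load_convex.
Qed.

Definition move_weight c (a b : 'I_n) (x : nat) (j : 'I_n) : nat :=
  if j == a then c a + x else if j == b then c b - x else c j.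

Lemma sum_move_weight c (a b : 'I_n) x (w : 'I_n -> nat) :
  a != b -> x <= c b ->
  \sum_j move_weight c a b x j * w j + x * w b = \sum_j c j * w j + x * w a.
Proof.
move=> neq_ab le_xcb; have neq_ba : b != a by rewrite eq_sym.
rewrite (bigD1 a) // [in RHS](bigD1 a) // (bigD1 b) // [in RHS](bigD1 b) //=.
rewrite /move_weight eqxx (negbTE neq_ba) eqxx.
rewrite (eq_bigr (fun j => c j * w j)); last first.
  by move=> j /andP[/negbTE -> /negbTE ->].
have [z ->] : exists z, c b = z + x by exists (c b - x); rewrite subnK.
rewrite addnK; ring.
Qed.

Lemma max_load_sum_move c (a b : 'I_n) x :
  a != b -> x <= c b -> c b - x <= c a ->
  max_load_sum c <= max_load_sum (move_weight c a b x).
Proof.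
move=> neq_ab le_xcb le_ca.
have [->|x_gt0] := posnP x.
  apply: max_load_sum_le => j; rewrite /move_weight addn0 subn0.
  by do 2?case: eqP => [->|_].
set c' := move_weight c a b x.
have [y cb] : exists y, c b = y + x by exists (c b - x); rewrite subnK.
have [z ca] : exists z, c a = y + z.
  by exists (c a - y); rewrite subnKC // -(addnK x y) -cb.
(* [c] is a convex combination of [c'] and of [c'] with the balls [a] and [b] swapped. *)
have comb j : (z + x) * c j = z * c' j + x * (c' \o tperm a b) j.
  rewrite /c' /move_weight /=; have neq_ba : b != a by rewrite eq_sym.
  case: (eqVneq j a) => [->|neq_ja].
    by rewrite tpermL eqxx ?(negbTE neq_ba) ca cb addnK; ring.
  case: (eqVneq j b) => [->|neq_jb].
    by rewrite tpermR eqxx ?(negbTE neq_ba) ca cb addnK; ring.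
  have -> : tperm a b j = j by rewrite tpermD 1?eq_sym.
  by rewrite ?(negbTE neq_ja) ?(negbTE neq_jb) mulnDl.
have := max_load_sum_convex comb; rewrite max_load_sum_perm -mulnDl.
by rewrite leq_pmul2l // addn_gt0 x_gt0 orbT.
Qed.

Definition packed W c := forall a b : 'I_n, a < b -> c a < W -> c b = 0.

(* Each step moves weight to an earlier ball, decreasing [\sum_j c j * j]. *)
Lemma exists_packed W c : (forall j, c j <= W) ->
  exists c', [/\ forall j, c' j <= W, \sum_j c' j = \sum_j c j, packed W c'
               & max_load_sum c <= max_load_sum c'].
Proof.
have [m] := ubnP (\sum_j c j * j); elim: m c => // m IHm c lt_pot le_cW.
pose movable := [exists a : 'I_n, exists b : 'I_n, [&& a < b, c a < W & 0 < c b]].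
have [|] := boolP movable; last first.
  move=> /existsPn not_movable; exists c; split=> // a b lt_ab lt_caW.
  by have /existsPn/(_ b) := not_movable a; rewrite lt_ab lt_caW lt0n negbK => /eqP.
move=> /existsP[a /existsP[b /and3P[lt_ab lt_caW cb_gt0]]].
have neq_ab : a != b by rewrite neq_ltn lt_ab.
set x := minn (c b) (W - c a); set c' := move_weight c a b x.
have le_xcb : x <= c b by rewrite geq_minl.
have x_gt0 : 0 < x by rewrite leq_min cb_gt0 subn_gt0.
have sum_c' : \sum_j c' j = \sum_j c j.
  have := sum_move_weight (fun=> 1) neq_ab le_xcb.
  by rewrite !(eq_bigr _ (fun j _ => muln1 _)) muln1 => /addIn.
have lt_pot' : \sum_j c' j * j < \sum_j c j * j.
  have := sum_move_weight (fun j => nat_of_ord j) neq_ab le_xcb; rewrite -/c'.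
  have : x * a < x * b by rewrite ltn_pmul2l.
  lia.
have le_c'W j : c' j <= W.
  rewrite /c' /move_weight; case: eqP => _; first by rewrite /x; have := le_cW b; lia.
  by case: eqP => _; first exact: leq_trans (leq_subr _ _) (le_cW b).
have le_move : max_load_sum c <= max_load_sum c'.
  by apply: max_load_sum_move => //; rewrite /x; have := le_cW b; lia.
have [c'' [le_c''W sum_c'' packed_c'' le_c'c'']] := IHm c' (leq_trans lt_pot' lt_pot) le_c'W.
by exists c''; split; rewrite ?sum_c'' ?(leq_trans le_move le_c'c'').
Qed.

Lemma packed_le_indicator W N c :
  (forall j, c j <= W) -> packed W c -> \sum_j c j <= N * W ->
  forall j, c j <= W * (j < N).
Proof.
move=> le_cW packed_c le_sum j.
have [->|cj_gt0] := posnP (c j); first by [].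
have full (a : 'I_n) : a < j -> c a = W.
  move=> lt_aj; apply/eqP; rewrite eqn_leq le_cW leqNgt; apply/negP => lt_caW.
  by move: cj_gt0; rewrite (packed_c a j lt_aj lt_caW).
have : j * W + c j <= N * W.
  apply: leq_trans le_sum; rewrite (bigID (fun a : 'I_n => a < j)) /=.
  rewrite (big_ord_narrow (ltnW (ltn_ord j))) [X in _ <= X + _](eq_bigr (fun=> W)); last first.
    by move=> a _; apply: full; rewrite /= ltn_ord.
  rewrite sum_nat_const card_ord leq_add2l (bigD1 j) ?ltnn //=; exact: leq_addr.
move=> le_jWN; have W_gt0 : 0 < W := leq_trans cj_gt0 (le_cW j).
have : j * W < N * W by lia.
by rewrite ltn_pmul2r // => ->; rewrite muln1.
Qed.

Lemma eq_max_load_sum c d : c =1 d -> max_load_sum c = max_load_sum d.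
Proof. by move=> eq_cd; do 3![apply: eq_bigr => ? _]. Qed.

Lemma max_load_sum_scale W d :
  max_load_sum (fun j => W * d j) = W * max_load_sum d.
Proof.
rewrite /max_load_sum big_distrr /=; apply: eq_bigr => f _.
rewrite /max_load (big_morph _ (maxnMr W) (muln0 _)); apply: eq_bigr => i _.
by rewrite /bin_load big_distrr.
Qed.

Lemma max_load_sum0 c : (forall j, c j = 0) -> max_load_sum c = 0.
Proof.
move=> c0; rewrite (@eq_max_load_sum _ (fun j => 0 * c j)) => [|j].
  by rewrite max_load_sum_scale.
by rewrite c0.
Qed.

End FixedBalls.

Lemma sum_ffun_lshift (T : finType) N k (G : {ffun 'I_N -> T} -> nat) :
  \sum_(f : {ffun 'I_(N + k) -> T}) G [ffun j => f (lshift k j)]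
    = #|T| ^ k * \sum_g G g.
Proof.
pose join (gh : {ffun 'I_N -> T} * {ffun 'I_k -> T}) : {ffun 'I_(N + k) -> T} :=
  [ffun i => match split i with inl j => gh.1 j | inr j => gh.2 j end].
have join_l gh j : join gh (lshift k j) = gh.1 j by rewrite ffunE (unsplitK (inl j)).
have join_r gh j : join gh (rshift N j) = gh.2 j by rewrite ffunE (unsplitK (inr j)).
rewrite (reindex join); last first.
  exists (fun f : {ffun 'I_(N + k) -> T} =>
            ([ffun j => f (lshift k j)], [ffun j => f (rshift N j)])).
    by move=> [g h] _; congr pair; apply/ffunP => j; rewrite ffunE ?join_l ?join_r.
  move=> f _; apply/ffunP => i; rewrite ffunE -{2}(splitK i).
  by case: (split i) => j /=; rewrite ffunE.
have join_lshift gh : [ffun j => join gh (lshift k j)] = gh.1.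
  by apply/ffunP => j; rewrite ffunE join_l.
under eq_bigr => gh _ do rewrite join_lshift.
rewrite -(pair_bigA _ (fun g h => G g)) big_distrr /=; apply: eq_bigr => g _.
by rewrite sum_nat_const card_ffun card_ord mulnC.
Qed.

Lemma max_load_sum_lshift N k (c : 'I_(N + k) -> nat) :
  (forall j, c (rshift N j) = 0) ->
  max_load_sum c = p ^ k * max_load_sum (c \o lshift k).
Proof.
move=> c_r0; rewrite -{1}(card_ord p) -sum_ffun_lshift; apply: eq_bigr => f _.
apply: eq_bigr => i _; rewrite /bin_load big_split_ord /= [X in _ + X]big1 => [|j _].
  by rewrite addn0; apply: eq_bigl => j; rewrite ffunE.
exact: c_r0.
Qed.

Definition unit_max_load_sum N := max_load_sum (fun _ : 'I_N => 1).

Lemma max_load_sum_prefix N k :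
  max_load_sum (fun j : 'I_(N + k) => (j < N : nat)) = p ^ k * unit_max_load_sum N.
Proof.
rewrite max_load_sum_lshift => [|j]; last by rewrite /= ltnNge leq_addr.
by congr (_ * _); apply: eq_max_load_sum => j /=; rewrite ltn_ord.
Qed.

Lemma max_load_sum_indicator n N :
  max_load_sum (fun j : 'I_n => (j < N : nat)) * p ^ N
    <= unit_max_load_sum N * p ^ n.
Proof.
have [le_Nn|lt_nN] := leqP N n.
  have [k ->] : exists k, n = N + k by exists (n - N); rewrite subnKC.
  by rewrite max_load_sum_prefix expnD; apply: eq_leq; ring.
have [k ->] : exists k, N = n + k by exists (N - n); rewrite subnKC // ltnW.
have more_balls : p ^ k * unit_max_load_sum n <= unit_max_load_sum (n + k).
  by rewrite -max_load_sum_prefix max_load_sum_le // => j; case: (_ < _).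
rewrite (eq_max_load_sum (d := fun=> 1)) => [|j]; last first.
  by rewrite (leq_trans (ltn_ord j)) ?leq_addr.
have -> : max_load_sum (fun _ : 'I_n => 1) * p ^ (n + k) = p ^ k * unit_max_load_sum n * p ^ n.
  by rewrite expnD /unit_max_load_sum; ring.
by rewrite leq_mul2r more_balls orbT.
Qed.

Lemma max_load_sum_le_unit n W N (c : 'I_n -> nat) :
  (forall j, c j <= W) -> \sum_j c j <= N * W ->
  max_load_sum c * p ^ N <= W * unit_max_load_sum N * p ^ n.
Proof.
move=> le_cW le_sum.
have [c' [le_c'W sum_c' packed_c' le_cc']] := exists_packed le_cW.
have le_c'_ind := packed_le_indicator le_c'W packed_c' (leq_trans (eq_leq sum_c') le_sum).
apply: leq_trans (leq_mul (leq_trans le_cc' (max_load_sum_le le_c'_ind)) (leqnn _)) _.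
by rewrite max_load_sum_scale -!mulnA leq_mul2l max_load_sum_indicator orbT.
Qed.

End WeightedBins.

(** * Loads of the two supersteps *)

Lemma leq_sum_seq_mem (T : eqType) (s : seq T) (F : T -> nat) x :
  x \in s -> F x <= \sum_(y <- s) F y.
Proof. by move=> x_s; rewrite (big_rem x x_s) leq_addr. Qed.

Lemma sum_behead_le (T : Type) (s : seq T) (F : T -> nat) :
  \sum_(x <- behead s) F x <= \sum_(x <- s) F x.
Proof. by case: s => [|x s] //=; rewrite big_cons leq_addl. Qed.

Section SuperstepLoads.
Variable S : mr_step.

Local Notation nA := (size (input S)).
Local Notation nK := (size (keys S)).
Local Notation nD := (size (Dseq S)).

Definition map_work (j : 'I_nA) : nat := time_mu (elA j).
Definition mapped_words (j : 'I_nA) : nat :=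
  \sum_(kv <- mu (elA j)) words_B kv.1 kv.2.
Definition group_words (t : 'I_nK) : nat := words_C (elK t).
Definition reduce_work (t : 'I_nK) : nat :=
  words_C (elK t) + time_rho (elK t) (Xof (elK t)).
Definition forwarded_words (t : 'I_nK) : nat :=
  \sum_(d <- behead (outs (elK t))) words_D d.
Definition redistributed_words (d : 'I_nD) : nat :=
  if (nth (0, 0) (Dpos S) d).2 != 0 then words_D (elD d) else 0.

Lemma sum_elA (F : tA S -> nat) : \sum_(j < nA) F (elA j) = \sum_(a <- input S) F a.
Proof. by rewrite (big_tnth _ _ (input S)). Qed.

Lemma sum_elK (F : tK S -> nat) : \sum_(t < nK) F (elK t) = \sum_(k <- keys S) F k.
Proof. by rewrite (big_tnth _ _ (keys S)). Qed.

Lemma sum_elD (F : tD S -> nat) : \sum_(d < nD) F (elD d) = \sum_(x <- Dseq S) F x.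
Proof. by rewrite (big_tnth _ _ (Dseq S)). Qed.

Lemma sum_Bseq (F : tK S * tV S -> nat) :
  \sum_(kv <- Defs.Bseq S) F kv = \sum_(a <- input S) \sum_(kv <- mu a) F kv.
Proof. by rewrite big_flatten big_map. Qed.

Lemma sum_Dseq (F : tD S -> nat) :
  \sum_(x <- Dseq S) F x = \sum_(k <- keys S) \sum_(x <- outs k) F x.
Proof. by rewrite big_flatten big_map. Qed.

Lemma elK_keys (t : 'I_nK) : elK t \in keys S.
Proof. exact: mem_tnth. Qed.

Lemma map_work_le j : map_work j <= work_max S.
Proof.
apply: leq_trans (leq_maxl _ _); rewrite (big_tnth _ _ (input S)).
exact: (leq_bigmax (F := fun j => time_mu (elA j)) j).
Qed.

Lemma sum_map_work : \sum_j map_work j <= work_total S.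
Proof. by rewrite /work_total -sum_elA leq_addr. Qed.

Lemma time_rho_le k : k \in keys S -> time_rho k (Xof k) <= work_max S.
Proof.
move=> k_keys; apply: leq_trans (leq_maxr _ _).
exact: (@leq_bigmax_seq _ _ xpredT (fun k => time_rho k (Xof k)) _ k_keys).
Qed.

Lemma words_rho_call_le k : k \in keys S -> words_rho_call k <= mem_max S.
Proof.
move=> k_keys; apply: leq_trans (leq_maxr _ _).
exact: (@leq_bigmax_seq _ _ xpredT (@words_rho_call S) _ k_keys).
Qed.

Lemma words_mu_call_le (j : 'I_nA) : words_mu_call (elA j) <= mem_max S.
Proof.
apply: leq_trans (leq_maxl _ _); rewrite (big_tnth _ _ (input S)).
exact: (leq_bigmax (F := fun j => words_mu_call (elA j)) j).
Qed.

Lemma mapped_words_le j : mapped_words j <= mem_max S.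
Proof. exact: leq_trans (leq_addl _ _) (words_mu_call_le j). Qed.

Lemma sum_mapped_words : \sum_j mapped_words j <= mem_total S.
Proof.
rewrite /mapped_words (sum_elA (fun a => \sum_(kv <- mu a) words_B kv.1 kv.2)).
by rewrite /mem_total sum_Bseq; lia.
Qed.

Lemma group_words_le t : group_words t <= mem_max S.
Proof. by apply: leq_trans (words_rho_call_le (elK_keys t)); exact: leq_addr. Qed.

Lemma sum_group_words : \sum_t group_words t <= mem_total S.
Proof. by rewrite /group_words (sum_elK (@words_C S)) /mem_total; lia. Qed.

Lemma forwarded_words_le t : forwarded_words t <= mem_max S.
Proof.
apply: leq_trans (words_rho_call_le (elK_keys t)).
exact: leq_trans (sum_behead_le _ _) (leq_addl _ _).
Qed.

Lemma sum_forwarded_words : \sum_t forwarded_words t <= mem_total S.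
Proof.
apply: (@leq_trans (\sum_t \sum_(d <- outs (elK t)) words_D d)).
  by apply: leq_sum => t _; exact: sum_behead_le.
rewrite (sum_elK (fun k => \sum_(d <- outs k) words_D d)).
by rewrite /mem_total sum_Dseq; lia.
Qed.

Lemma redistributed_words_le d : redistributed_words d <= mem_max S.
Proof.
rewrite /redistributed_words; case: ifP => // _.
have : words_D (elD d) \in [seq words_D x | x <- Dseq S].
  by rewrite /elD (tnth_nth (elD d)) -(nth_map _ 0) ?mem_nth ?size_map.
rewrite /Dseq map_flatten -map_comp => /flattenP[_ /mapP[k k_keys ->] d_outs].
apply: leq_trans (words_rho_call_le k_keys) ; apply: leq_trans (leq_addl _ _).
by rewrite -(big_map (@words_D S) xpredT id) leq_sum_seq_mem.
Qed.

Lemma sum_redistributed_words : \sum_d redistributed_words d <= mem_total S.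
Proof.
apply: (@leq_trans (\sum_d words_D (elD d))).
  by apply: leq_sum => d _; rewrite /redistributed_words; case: ifP.
by rewrite (sum_elD (@words_D S)) /mem_total; lia.
Qed.

Hypothesis rho_reads : rho_reads_input S.

Lemma reduce_work_le t : reduce_work t <= 2 * work_max S.
Proof.
have := rho_reads (elK_keys t); have := time_rho_le (elK_keys t).
by rewrite /reduce_work; lia.
Qed.

Lemma sum_reduce_work : \sum_t reduce_work t <= 2 * work_total S.
Proof.
have : \sum_(t < nK) words_C (elK t) <= \sum_(t < nK) time_rho (elK t) (Xof (elK t)).
  by apply: leq_sum => t _; exact/rho_reads/elK_keys.
rewrite /reduce_work big_split /= /work_total (sum_elK (fun k => time_rho k (Xof k))).
lia.
Qed.

End SuperstepLoads.

Lemma bigmax_maxn_le n (F G : 'I_n -> nat) :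
  \max_i maxn (F i) (G i) <= \max_i F i + \max_i G i.
Proof.
apply/bigmax_leqP => i _; rewrite geq_max.
by apply/andP; split; apply: leq_trans (leq_bigmax i) _; [apply: leq_addr | apply: leq_addl].
Qed.

Lemma card_Omega (S : mr_step) p :
  #|{: Omega S p}| = p ^ size (input S) * p ^ size (keys S) * p ^ size (Dseq S).
Proof. by rewrite !card_prod !card_ffun !card_ord. Qed.

(** * Placement of the output *)

Lemma card_pred_pair (A B : finType) (PA : pred A) (PB : pred B) :
  #|[pred x : A * B | PA x.1 && PB x.2]| = #|PA| * #|PB|.
Proof.
by rewrite -(cardsE PA) -(cardsE PB) -cardsX -cardsE; apply: eq_card => x; rewrite !inE.
Qed.

Lemma card_ffun_agree (I T : finType) (Q : pred I) (v : I -> T) :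
  #|[pred f : {ffun I -> T} | [forall i, Q i ==> (f i == v i)]]| = #|T| ^ #|[predC Q]|.
Proof.
pose F i : pred T := if Q i then pred1 (v i) else predT.
rewrite (eq_card (B := family F)) => [|f]; last first.
  rewrite !inE; apply/forallP/familyP => agree_f i; have := agree_f i;
    by rewrite /F; case: (Q i) => //= /eqP ->; rewrite ?inE.
rewrite card_family foldrE big_image /= (eq_bigr (fun i => if ~~ Q i then #|T| else 1)).
  by rewrite -big_mkcond /= -prod_nat_const; apply: eq_bigl => i; rewrite !inE.
by move=> i _; rewrite /F; case: (Q i) => /=; [exact: card1 | apply: eq_card].
Qed.

Section OutputPlacement.
Variable S : mr_step.

Definition ranked_outputs (k : nat) (s : seq (tK S)) : seq (nat * nat) :=
  flatten [seq [seq (tk.1, j) | j <- iota 0 (size (outs tk.2))]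
          | tk <- zip (iota k (size s)) s].

Lemma ranked_outputs_cons k x s :
  ranked_outputs k (x :: s)
    = [seq (k, j) | j <- iota 0 (size (outs x))] ++ ranked_outputs k.+1 s.
Proof. by []. Qed.

Lemma size_ranked_outputs k s :
  size (ranked_outputs k s) = size (flatten (map (@outs S) s)).
Proof.
elim: s k => [|x s IHs] k //.
by rewrite ranked_outputs_cons /= !size_cat size_map size_iota IHs.
Qed.

Lemma ranked_outputs_key k s x : x \in ranked_outputs k s -> k <= x.1 < k + size s.
Proof.
elim: s k => [|y s IHs] k //.
rewrite ranked_outputs_cons mem_cat => /orP[/mapP[j _ ->]|/IHs] /=.
  by rewrite leqnn addnS ltnS leq_addr.
by rewrite addSnnS => /andP[lt_kx ->]; rewrite ltnW.
Qed.

Lemma uniq_ranked_outputs k s : uniq (ranked_outputs k s).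
Proof.
elim: s k => [|y s IHs] k //.
rewrite ranked_outputs_cons cat_uniq IHs andbT map_inj_uniq ?iota_uniq //=; last first.
  by move=> i j [].
apply/hasPn => x /ranked_outputs_key /andP[lt_kx _]; apply/mapP => -[j _ eq_x].
by move: lt_kx; rewrite eq_x ltnn.
Qed.

Variable p : nat.
Hypothesis p_gt0 : 0 < p.

Local Notation nA := (size (input S)).
Local Notation nK := (size (keys S)).
Local Notation nD := (size (Dseq S)).
Local Notation rank d := (nth (0, 0) (Dpos S) d).

Lemma size_Dpos : size (Dpos S) = nD.
Proof. exact: size_ranked_outputs. Qed.

Definition first_output (d : 'I_nD) : bool := (rank d).2 == 0.

Lemma key_index_lt (d : 'I_nD) : (rank d).1 < nK.
Proof.
have /ranked_outputs_key /andP[_ //] : rank d \in ranked_outputs 0 (keys S).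
by rewrite mem_nth // size_Dpos.
Qed.

Definition key_of (d : 'I_nD) : 'I_nK := Ordinal (key_index_lt d).

Lemma key_of_inj : {in first_output &, injective key_of}.
Proof.
move=> d1 d2 /eqP first1 /eqP first2 /(congr1 val) /= eq_key.
have eq_rank : rank d1 = rank d2.
  by move: eq_key first1 first2; case: (rank d1) => ? ?; case: (rank d2) => ? ? /= -> -> ->.
apply/val_inj/eqP; rewrite -(nth_uniq (0, 0) _ _ (uniq_ranked_outputs 0 (keys S))).
  by rewrite eq_rank.
all: by rewrite size_ranked_outputs ltn_ord.
Qed.

Lemma placeDE (om : Omega S p) d :
  placeD om d = val (if first_output d then om.1.2 (key_of d) else om.2 d).
Proof.
rewrite /placeD /first_output; case: ifP => // _.
by rewrite (_ : (rank d).1 = val (key_of d)) // /fun_at valK.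
Qed.

Variable tau : {ffun 'I_nD -> 'I_p}.

Definition key_target (t : 'I_nK) : 'I_p :=
  if [pick d | first_output d && (key_of d == t)] is Some d then tau d else Ordinal p_gt0.

Definition first_keys : {set 'I_nK} := key_of @: [set d | first_output d].

Lemma key_target_key d : first_output d -> key_target (key_of d) = tau d.
Proof.
move=> first_d; rewrite /key_target; case: pickP => [d' /andP[first_d' /eqP eq_key]|/(_ d)].
  by rewrite (key_of_inj first_d' first_d eq_key).
by rewrite first_d eqxx.
Qed.

Lemma card_first_keys : #|first_keys| = #|first_output|.
Proof. by rewrite card_in_imset ?cardsE // => d1 d2; rewrite !inE; exact: key_of_inj. Qed.

Lemma placeD_eqE (om : Omega S p) :
  [forall d, placeD om d == val (tau d)]
    = [forall t, (t \in first_keys) ==> (om.1.2 t == key_target t)]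
      && [forall d, ~~ first_output d ==> (om.2 d == tau d)].
Proof.
apply/forallP/andP => [placed | [/forallP hashed /forallP sent] d].
  split; apply/forallP.
    move=> t; apply/implyP => /imsetP[d]; rewrite inE => first_d ->.
    by have := placed d; rewrite placeDE first_d key_target_key.
  move=> d; apply/implyP => /negbTE not_first.
  by have := placed d; rewrite placeDE not_first.
rewrite placeDE; case: ifP => first_d; last by have := sent d; rewrite first_d.
by have := hashed (key_of d); rewrite imset_f ?inE // key_target_key.
Qed.

Lemma placeD_uniform :
  #|[pred om : Omega S p | [forall d, placeD om d == val (tau d)]]| * p ^ nD
    = #|{: Omega S p}|.
Proof.
pose hashed_ok (h : {ffun 'I_nK -> 'I_p}) :=
  [forall t, (t \in first_keys) ==> (h t == key_target t)].
pose sent_ok (r : {ffun 'I_nD -> 'I_p}) := [forall d, ~~ first_output d ==> (r d == tau d)].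
have -> : #|[pred om : Omega S p | [forall d, placeD om d == val (tau d)]]|
    = #|[pred om : Omega S p |
         [pred x : {ffun 'I_nA -> 'I_p} * {ffun 'I_nK -> 'I_p} |
            predT x.1 && hashed_ok x.2] om.1 && sent_ok om.2]|.
  by apply: eq_card => om; rewrite !inE placeD_eqE.
rewrite !card_pred_pair (card_ffun_agree (fun t => t \in first_keys) key_target).
rewrite (card_ffun_agree (fun d => ~~ first_output d) tau) card_Omega card_ffun !card_ord.
have card_other_keys : #|[predC (fun t => t \in first_keys)]| + #|first_output| = nK.
  have -> : #|[predC (fun t => t \in first_keys)]| = #|[predC first_keys]| by exact: eq_card.
  by have := cardC first_keys; rewrite card_ord card_first_keys; lia.
have card_first : #|[predC (fun d => ~~ first_output d)]| = #|first_output|.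
  by apply: eq_card => d; rewrite !inE negbK.
by rewrite card_first -!expnD -(addnA nA) card_other_keys.
Qed.

End OutputPlacement.

(** * Expected maximum load and expected running time *)

Local Open Scope ring_scope.

Lemma expR_le1D2x (R : realType) (x : R) : 0 <= x -> x <= 1 / 2 -> expR x <= 1 + 2 * x.
Proof.
move=> x_ge0 x_le.
have : expR x * (1 - x) <= 1.
  rewrite -[X in _ <= X](expRxMexpNx_1 x) ler_wpM2l ?expR_ge0 //.
  by have := expR_ge1Dx (- x); rewrite addrC.
have := expR_ge0 x; nra.
Qed.

Lemma ln_le_subr1 (R : realType) (y : R) : 0 < y -> ln y <= y - 1.
Proof. by move=> y_gt0; have := expR_ge1Dx (ln y); rewrite lnK ?posrE //; lra. Qed.

Lemma sum_ln_le_mean (R : realType) (T : finType) (X : T -> R) :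
  (forall t, 0 < X t) ->
  \sum_t ln (X t) <= #|T|%:R * ln ((\sum_t X t) / #|T|%:R).
Proof.
move=> X_gt0; have [T0|T_gt0] := posnP #|T|.
  by rewrite T0 mul0r big1 // => t _; have := card0_eq T0 t; rewrite !inE.
have T_gt0R : 0 < #|T|%:R :> R by rewrite ltr0n.
set m := (\sum_t X t) / #|T|%:R.
have m_gt0 : 0 < m.
  have /card_gt0P[t0 _] := T_gt0.
  by rewrite divr_gt0 // (bigD1 t0) //= ltr_pwDl ?X_gt0 // sumr_ge0 // => t _; apply/ltW.
(* Tangent line of the concave function [ln] at the mean [m]. *)
have tangent t : ln (X t) <= ln m + (X t / m - 1).
  by have := ln_le_subr1 (divr_gt0 (X_gt0 t) m_gt0); rewrite ln_div ?posrE //; lra.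
apply: le_trans (ler_sum _ (fun t _ => tangent t)) _.
have sumXE : \sum_t X t = m * #|T|%:R by rewrite /m divfK ?gt_eqF.
rewrite big_split /= sumrB -mulr_suml !sumr_const sumXE mulrAC divff ?gt_eqF //.
by rewrite mul1r subrr addr0 mulr_natl.
Qed.

Section ExpectedMaxLoad.
Variables (R : realType) (p : nat).
Hypothesis p_gt0 : (0 < p)%N.

Definition exp_max_load n (c : 'I_n -> nat) : R := (max_load_sum p c)%:R / (p ^ n)%:R.

Let pn_gt0 n : 0 < (p ^ n)%:R :> R.
Proof. by rewrite ltr0n expn_gt0 p_gt0. Qed.

Lemma ohatE (b : R) :
  ohat b p = (unit_max_load_sum p `|Num.ceil b|)%:R / (p ^ `|Num.ceil b|)%:R.
Proof.
rewrite /ohat /unit_max_load_sum /max_load_sum natr_sum; congr (_ / _).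
apply: eq_bigr => f _; congr (_%:R); apply: eq_bigr => i _.
by rewrite /bin_load sum1_card.
Qed.

Lemma ohat_ge0 (b : R) : 0 <= ohat b p.
Proof. by rewrite ohatE divr_ge0. Qed.

Lemma exp_max_load_le_ohat n W T (c : 'I_n -> nat) :
  (forall j, c j <= W)%N -> (\sum_j c j <= T)%N ->
  exp_max_load c <= W%:R * ohat (T%:R / W%:R) p.
Proof.
move=> le_cW le_sum; have [W0|W_gt0] := posnP W.
  rewrite W0 mul0r /exp_max_load max_load_sum0 ?mul0r // => j.
  by apply/eqP; rewrite -leqn0 -W0.
set N := `|Num.ceil (T%:R / W%:R : R)|%N.
have le_TNW : (T <= N * W)%N.
  rewrite -(ler_nat R) natrM -ler_pdivrMr ?ltr0n // /N natr_absz ger0_norm ?ceil_ge //.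
  by rewrite ceil_ge0 (lt_le_trans _ (divr_ge0 _ _)) ?ltrN10.
have := max_load_sum_le_unit p le_cW (leq_trans le_sum le_TNW).
rewrite -(ler_nat R) !natrM ohatE -/N /exp_max_load ler_pdivrMr // mulrA => le_mls.
by rewrite mulrAC ler_pdivlMr.
Qed.

Lemma sum_expR_bin_load n (c : 'I_n -> nat) (t : R) (i : 'I_p) :
  \sum_(f : {ffun 'I_n -> 'I_p}) expR (t * (bin_load c f i)%:R)
    = \prod_j (p%:R + (expR (t * (c j)%:R) - 1)).
Proof.
have prodE (f : {ffun 'I_n -> 'I_p}) : expR (t * (bin_load c f i)%:R)
    = \prod_j (if f j == i then expR (t * (c j)%:R) else 1).
  by rewrite /bin_load natr_sum mulr_sumr expR_sum big_mkcond.
rewrite (eq_bigr _ (fun f _ => prodE f)).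
rewrite -(bigA_distr_bigA (fun j k => if k == i then expR (t * (c j)%:R) else 1)).
apply: eq_bigr => j _ /=; set e := expR _.
rewrite (eq_bigr (fun k => 1 + (if k == i then e - 1 else 0))) => [|k _]; last first.
  by case: eqP => _; rewrite ?addr0 // addrC subrK.
by rewrite big_split /= -big_mkcond big_pred1_eq sumr_const card_ord.
Qed.

Lemma sum_expR_bin_load_le n (c : 'I_n -> nat) (t : R) (T : nat) (i : 'I_p) :
  0 <= t -> (forall j, t * (c j)%:R <= 1 / 2) -> (\sum_j c j <= T)%N ->
  \sum_(f : {ffun 'I_n -> 'I_p}) expR (t * (bin_load c f i)%:R)
    <= (p ^ n)%:R * expR (2 * t * T%:R / p%:R).
Proof.
move=> t_ge0 tc_le le_sum; have p_gt0R : 0 < p%:R :> R by rewrite ltr0n.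
have factor_le j :
    p%:R + (expR (t * (c j)%:R) - 1) <= p%:R * expR (2 * t * (c j)%:R / p%:R).
  have tc_ge0 : 0 <= t * (c j)%:R by rewrite mulr_ge0.
  have := expR_le1D2x tc_ge0 (tc_le j).
  have := ler_wpM2l (ltW p_gt0R) (expR_ge1Dx (2 * t * (c j)%:R / p%:R)).
  by rewrite mulrDr mulr1 mulrCA divff ?gt_eqF ?mulr1 //; lra.
rewrite sum_expR_bin_load.
apply: (@le_trans _ _ (\prod_j (p%:R * expR (2 * t * (c j)%:R / p%:R)))).
  apply: ler_prod => j _; rewrite factor_le andbT.
  have : 1 <= p%:R :> R by rewrite ler1n.
  by have := expR_gt0 (t * (c j)%:R); lra.
rewrite big_split /= prodr_const card_ord -expR_sum natrX ler_pM2l ?exprn_gt0 //.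
rewrite ler_expR -mulr_suml ler_pM2r ?invr_gt0 // -mulr_sumr -natr_sum.
by rewrite ler_wpM2l ?mulr_ge0 // ler_nat.
Qed.

Lemma max_load_le_ln n (c : 'I_n -> nat) (f : {ffun 'I_n -> 'I_p}) (t : R) :
  0 < t -> (max_load c f)%:R <= t^-1 * ln (\sum_i expR (t * (bin_load c f i)%:R)).
Proof.
move=> t_gt0; rewrite /max_load.
have card_gt0 : (0 < #|'I_p|)%N by rewrite card_ord.
have [i0 _ ->] := eq_bigmax_cond (bin_load c f) card_gt0.
rewrite ler_pdivlMl // -[X in X <= _]expRK ler_ln ?posrE ?expR_gt0 //.
  by rewrite (bigD1 i0) //= lerDl sumr_ge0 // => i _; exact: expR_ge0.
by rewrite (bigD1 i0) //= ltr_pwDl ?expR_gt0 ?sumr_ge0 // => i _; exact: expR_ge0.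
Qed.

Lemma exp_max_load_le_mgf n T (c : 'I_n -> nat) (t : R) :
  0 < t -> (forall j, t * (c j)%:R <= 1 / 2) -> (\sum_j c j <= T)%N ->
  exp_max_load c <= t^-1 * (ln p%:R + 2 * t * T%:R / p%:R).
Proof.
move=> t_gt0 tc_le le_sum; have p_gt0R : 0 < p%:R :> R by rewrite ltr0n.
pose X (f : {ffun 'I_n -> 'I_p}) := \sum_i expR (t * (bin_load c f i)%:R).
have X_gt0 f : 0 < X f.
  rewrite /X (bigD1 (Ordinal p_gt0)) //= ltr_pwDl ?expR_gt0 ?sumr_ge0 // => i _.
  exact: expR_ge0.
have sumX_gt0 : 0 < \sum_f X f.
  by rewrite (bigD1 [ffun=> Ordinal p_gt0]) //= ltr_pwDl ?sumr_ge0 // => f _; apply/ltW.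
have le_sumX : \sum_f X f <= (p ^ n)%:R * (p%:R * expR (2 * t * T%:R / p%:R)).
  rewrite /X exchange_big /=.
  apply: le_trans (ler_sum _ (fun i _ => sum_expR_bin_load_le i (ltW t_gt0) tc_le le_sum)) _.
  by rewrite sumr_const card_ord [X in _ <= X]mulrCA [X in _ <= X]mulr_natl.
have le_ln_mean : ln ((\sum_f X f) / (p ^ n)%:R) <= ln p%:R + 2 * t * T%:R / p%:R.
  rewrite -[X in _ + X]expRK -lnM ?posrE ?expR_gt0 //.
  rewrite ler_ln ?posrE ?divr_gt0 ?mulr_gt0 ?expR_gt0 //.
  by rewrite ler_pdivrMr // mulrC.
have := sum_ln_le_mean X_gt0; rewrite card_ffun !card_ord => jensen.
rewrite /exp_max_load ler_pdivrMr // natr_sum.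
apply: le_trans (ler_sum _ (fun f _ => max_load_le_ln c f t_gt0)) _.
rewrite -mulr_sumr -[_ * _ * (p ^ n)%:R]mulrA ler_pM2l ?invr_gt0 //.
by apply: le_trans jensen _; rewrite mulrC ler_pM2r.
Qed.

Lemma exp_max_load_le_log n W T (c : 'I_n -> nat) :
  (forall j, c j <= W)%N -> (\sum_j c j <= T)%N ->
  exp_max_load c <= 2 * W%:R * ln p%:R + 2 * T%:R / p%:R.
Proof.
move=> le_cW le_sum; have p_gt0R : 0 < p%:R :> R by rewrite ltr0n.
have lnp_ge0 : 0 <= ln (p%:R : R) by rewrite ln_ge0 // ler1n.
have [W0|W_gt0] := posnP W.
  rewrite /exp_max_load max_load_sum0 => [|j]; last by apply/eqP; rewrite -leqn0 -W0.
  by rewrite mul0r addr_ge0 ?divr_ge0 ?mulr_ge0.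
have W_gt0R : 0 < W%:R :> R by rewrite ltr0n.
have t_gt0 : 0 < (2 * W%:R : R)^-1 by rewrite invr_gt0 mulr_gt0.
apply: le_trans (exp_max_load_le_mgf t_gt0 _ le_sum) _ => [j|].
  have : (c j)%:R <= W%:R :> R by rewrite ler_nat.
  by rewrite mulrC ler_pdivrMr ?mulr_gt0 //; lra.
by rewrite invrK le_eqVlt; apply/orP; left; apply/eqP; field; rewrite ?mulf_neq0 ?gt_eqF.
Qed.

End ExpectedMaxLoad.

Lemma sum_pair_fst (R : nmodType) (X Y : finType) (G : X -> R) :
  \sum_(xy : X * Y) G xy.1 = (\sum_x G x) *+ #|Y|.
Proof.
rewrite -(pair_bigA _ (fun x _ => G x)) /= -sumrMnl.
by apply: eq_bigr => x _; rewrite sumr_const.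
Qed.

Lemma sum_pair_snd (R : nmodType) (X Y : finType) (G : Y -> R) :
  \sum_(xy : X * Y) G xy.2 = (\sum_y G y) *+ #|X|.
Proof.
rewrite -(pair_bigA _ (fun _ y => G y)) /= exchange_big -sumrMnl.
by apply: eq_bigr => y _; rewrite sumr_const.
Qed.

Section ExpectedTime.
Variables (R : realType) (S : mr_step) (p : nat).
Hypothesis p_gt0 : (0 < p)%N.

Local Notation nA := (size (input S)).
Local Notation nK := (size (keys S)).
Local Notation nD := (size (Dseq S)).
Local Notation E := (exp_max_load R p).

Lemma sum_max_load n (c : 'I_n -> nat) :
  \sum_(f : {ffun 'I_n -> 'I_p}) (max_load c f)%:R = E c *+ p ^ n.
Proof.
rewrite -natr_sum -[in RHS]mulr_natr /exp_max_load divfK //.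
by rewrite gt_eqF // ltr0n expn_gt0 p_gt0.
Qed.

Lemma sum_Omega_input (c : 'I_nA -> nat) :
  \sum_(om : Omega S p) (max_load c om.1.1)%:R = E c *+ #|{: Omega S p}|.
Proof.
rewrite (sum_pair_fst _ (fun xy : {ffun 'I_nA -> 'I_p} * {ffun 'I_nK -> 'I_p} =>
  (max_load c xy.1)%:R)).
rewrite (sum_pair_fst _ (fun f : {ffun 'I_nA -> 'I_p} => (max_load c f)%:R)) sum_max_load.
by rewrite !card_ffun !card_ord card_Omega !mulrnA.
Qed.

Lemma sum_Omega_keys (c : 'I_nK -> nat) :
  \sum_(om : Omega S p) (max_load c om.1.2)%:R = E c *+ #|{: Omega S p}|.
Proof.
rewrite (sum_pair_fst _ (fun xy : {ffun 'I_nA -> 'I_p} * {ffun 'I_nK -> 'I_p} =>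
  (max_load c xy.2)%:R)).
rewrite (sum_pair_snd _ (fun f : {ffun 'I_nK -> 'I_p} => (max_load c f)%:R)) sum_max_load.
by rewrite !card_ffun !card_ord card_Omega [(p ^ nA * _)%N]mulnC !mulrnA.
Qed.

Lemma sum_Omega_outputs (c : 'I_nD -> nat) :
  \sum_(om : Omega S p) (max_load c om.2)%:R = E c *+ #|{: Omega S p}|.
Proof.
rewrite (sum_pair_snd _ (fun f : {ffun 'I_nD -> 'I_p} => (max_load c f)%:R)) sum_max_load.
by rewrite card_Omega !card_prod !card_ffun !card_ord -mulrnA mulnC.
Qed.

Lemma bsp_time_le (L g : R) (om : Omega S p) : 0 <= g ->
  bsp_time L g om <=
    (max_load (map_work (S:=S)) om.1.1)%:R + (max_load (reduce_work (S:=S)) om.1.2)%:R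
    + 2 * L
    + g * ((max_load (mapped_words (S:=S)) om.1.1)%:R
           + (max_load (group_words (S:=S)) om.1.2)%:R
           + (max_load (forwarded_words (S:=S)) om.1.2)%:R
           + (max_load (redistributed_words (S:=S)) om.2)%:R).
Proof.
move=> g_ge0.
have comm1 : (\max_i maxn (sent1 om i) (recv1 om i))%:R
    <= (max_load (mapped_words (S:=S)) om.1.1)%:R
       + (max_load (group_words (S:=S)) om.1.2)%:R :> R.
  by rewrite -natrD ler_nat bigmax_maxn_le.
have recv2E i : recv2 om i = bin_load (redistributed_words (S:=S)) om.2 i.
  by rewrite /recv2 /bin_load big_mkcondl.
have comm2 : (\max_i maxn (sent2 om i) (recv2 om i))%:R
    <= (max_load (forwarded_words (S:=S)) om.1.2)%:R
       + (max_load (redistributed_words (S:=S)) om.2)%:R :> R.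
  by rewrite -natrD ler_nat (eq_bigr _ (fun i _ => congr1 _ (recv2E i))) bigmax_maxn_le.
have := ler_wpM2l g_ge0 comm1; have := ler_wpM2l g_ge0 comm2.
rewrite /bsp_time.
have -> : \max_i work1 om i = max_load (map_work (S:=S)) om.1.1 by [].
have -> : \max_i work2 om i = max_load (reduce_work (S:=S)) om.1.2 by [].
lra.
Qed.

Lemma expected_time_le (L g : R) : 0 <= g ->
  expected_time S p L g <=
    E (map_work (S:=S)) + E (reduce_work (S:=S)) + 2 * L
    + g * (E (mapped_words (S:=S)) + E (group_words (S:=S))
           + E (forwarded_words (S:=S)) + E (redistributed_words (S:=S))).
Proof.
move=> g_ge0; have card_gt0 : 0 < #|{: Omega S p}|%:R :> R.
  by rewrite card_Omega ltr0n !muln_gt0 !expn_gt0 p_gt0.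
rewrite /expected_time ler_pdivrMr //.
apply: le_trans (ler_sum _ (fun om _ => bsp_time_le L om g_ge0)) _.
rewrite !big_split /= -!mulr_sumr !big_split /= sumr_const.
rewrite sum_Omega_input !sum_Omega_keys sum_Omega_input sum_Omega_outputs.
by rewrite !card_Omega le_eqVlt; apply/orP; left; apply/eqP; ring.
Qed.

Lemma expected_time_le_bound (B : nat -> nat -> R) (L g : R) :
  (forall n W T (c : 'I_n -> nat),
     (forall j, c j <= W)%N -> (\sum_j c j <= T)%N -> E c <= B W T) ->
  0 <= g -> rho_reads_input S ->
  expected_time S p L g <=
    B (work_max S) (work_total S) + B (2 * work_max S)%N (2 * work_total S)%N
    + 2 * L + g * (4 * B (mem_max S) (mem_total S)).
Proof.
move=> E_le g_ge0 rho_reads; apply: le_trans (expected_time_le L g_ge0) _.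
have E_map := E_le _ _ _ _ (@map_work_le S) (@sum_map_work S).
have E_red := E_le _ _ _ _ (reduce_work_le rho_reads) (sum_reduce_work rho_reads).
have E_mapped := E_le _ _ _ _ (@mapped_words_le S) (@sum_mapped_words S).
have E_grp := E_le _ _ _ _ (@group_words_le S) (@sum_group_words S).
have E_fwd := E_le _ _ _ _ (@forwarded_words_le S) (@sum_forwarded_words S).
have E_redist := E_le _ _ _ _ (@redistributed_words_le S) (@sum_redistributed_words S).
have := ler_wpM2l g_ge0 (lerD (lerD (lerD E_mapped E_grp) E_fwd) E_redist).
lra.
Qed.

End ExpectedTime.

Lemma expected_time_le_ohat (R : realType) (S : mr_step) (p : nat) (L g : R) :
  (0 < p)%N -> 0 <= L -> 0 <= g -> rho_reads_input S ->
  expected_time S p L g <=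
    4 * ((work_max S)%:R * ohat ((work_total S)%:R / (work_max S)%:R) p + L
         + g * ((mem_max S)%:R * ohat ((mem_total S)%:R / (mem_max S)%:R) p)).
Proof.
move=> p_gt0 L_ge0 g_ge0 rho_reads.
pose B W T : R := W%:R * ohat (T%:R / W%:R) p.
have B_ge0 W T : 0 <= B W T by rewrite mulr_ge0 ?ohat_ge0.
have B_double W T : B (2 * W)%N (2 * T)%N = 2 * B W T.
  by rewrite /B !natrM -mulf_div divff ?mul1r ?pnatr_eq0 // mulrA.
have := @expected_time_le_bound R S p p_gt0 B L g
  (exp_max_load_le_ohat R p_gt0) g_ge0 rho_reads.
rewrite B_double; have := mulr_ge0 g_ge0 (B_ge0 (mem_max S) (mem_total S)).
by have := B_ge0 (work_max S) (work_total S); rewrite /B; lra.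
Qed.

Lemma expected_time_le_linear (R : realType) (c1 : R) (S : mr_step) (p : nat) (L g : R) :
  0 < c1 -> (0 < p)%N -> 0 <= L -> 0 <= g -> rho_reads_input S ->
  c1 * (work_max S)%:R * p%:R * ln p%:R <= (work_total S)%:R ->
  c1 * (mem_max S)%:R * p%:R * ln p%:R <= (mem_total S)%:R ->
  expected_time S p L g <=
    8 * (1 + c1^-1) * ((work_total S)%:R / p%:R + L + g * ((mem_total S)%:R / p%:R)).
Proof.
move=> c1_gt0 p_gt0 L_ge0 g_ge0 rho_reads le_work le_mem.
have p_gt0R : 0 < p%:R :> R by rewrite ltr0n.
pose B W T : R := 2 * W%:R * ln p%:R + 2 * T%:R / p%:R.
have B_double W T : B (2 * W)%N (2 * T)%N = 2 * B W T by rewrite /B !natrM; ring.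
have lnp_le W T :
    c1 * W%:R * p%:R * ln p%:R <= T%:R -> W%:R * ln p%:R <= c1^-1 * (T%:R / p%:R).
  by move=> le_WT; rewrite mulrA ler_pdivlMr // ler_pdivlMl //; lra.
have := @expected_time_le_bound R S p p_gt0 B L g
  (exp_max_load_le_log R p_gt0) g_ge0 rho_reads.
rewrite B_double /B.
have u_gt0 : 0 < c1^-1 by rewrite invr_gt0.
have wp_ge0 : 0 <= (work_total S)%:R / p%:R :> R by rewrite divr_ge0.
have mp_ge0 : 0 <= (mem_total S)%:R / p%:R :> R by rewrite divr_ge0.
have := lnp_le _ _ le_work; have := ler_wpM2l g_ge0 (lnp_le _ _ le_mem).
have := mulr_ge0 (ltW u_gt0) wp_ge0; have := mulr_ge0 (ltW u_gt0) L_ge0.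
have := mulr_ge0 g_ge0 mp_ge0; have := mulr_ge0 (ltW u_gt0) (mulr_ge0 g_ge0 mp_ge0).
lra.
Qed.

Unset Implicit Arguments.

Theorem theorem4p1 (R : realType) :
  (* expected time O(\hat w \hat o(w/\hat w,p) + L + g \hat m \hat o(m/\hat m,p)) *)
  (exists C : R, 0 < C /\
     forall (S : mr_step) (p : nat) (L g : R),
       (0 < p)%N -> 0 <= L -> 0 <= g -> rho_reads_input S ->
       expected_time S p L g <=
       C * ((work_max S)%:R * ohat ((work_total S)%:R / (work_max S)%:R) p
            + L
            + g * ((mem_max S)%:R * ohat ((mem_total S)%:R / (mem_max S)%:R) p)))
  /\
  (* expected time O(w/p + L + g m/p) if w = Omega(\hat w p log p) and
     m = Omega(\hat m p log p) *)
  (forall c1 : R, 0 < c1 ->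
   exists C : R, 0 < C /\
     forall (S : mr_step) (p : nat) (L g : R),
       (0 < p)%N -> 0 <= L -> 0 <= g -> rho_reads_input S ->
       c1 * (work_max S)%:R * p%:R * ln p%:R <= (work_total S)%:R ->
       c1 * (mem_max S)%:R * p%:R * ln p%:R <= (mem_total S)%:R ->
       expected_time S p L g <=
       C * ((work_total S)%:R / p%:R + L + g * ((mem_total S)%:R / p%:R)))
  /\
  (* the output D is randomly distributed: the placement of the elements of D
     is uniformly distributed over all assignments of them to PEs *)
  (forall (S : mr_step) (p : nat), (0 < p)%N ->
     forall tau : {ffun 'I_(size (Dseq S)) -> 'I_p},
       (#|[pred om : Omega S p | [forall d, placeD om d == val (tau d)]]|
          * p ^ size (Dseq S))%N = #|{: Omega S p}|).
Proof.
split; first by exists 4; split=> [|S p L g]; [lra | exact: expected_time_le_ohat].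
split; last by move=> S p p_gt0 tau; exact: placeD_uniform.
move=> c1 c1_gt0; exists (8 * (1 + c1^-1)); split=> [|S p L g].
  have : 0 < c1^-1 by rewrite invr_gt0.
  lra.
exact: expected_time_le_linear.
Qed.
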